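(* Let $\nu_0$ be a function on $\mathbb{Z}^d$ (initial mass configuration). If $T_1:[0,\tau_1]\to\mathbb{Z}^d$ and $T_2:[0,\tau_2]\to\mathbb{Z}^d$ are complete legal toppling functions for $\nu_0$, then $\mathcal{L}(T_1^{-1}(x))=\mathcal{L}(T_2^{-1}(x))$ for every $x\in\mathbb{Z}^d$. In particular $\tau_1=\tau_2$ and the final configurations $\nu_{\tau_1}$ (for $T_1$) and $\nu_{\tau_2}$ (for $T_2$) coincide.
   Context: $\mathcal{L}$ is Lebesgue measure on $\mathbb{R}$. The discrete Laplacian is $\Delta f(x)=\frac{1}{2d}\sum_{y\sim x}f(y)-f(x)$. A toppling function is a map $T:[0,\tau]\to\mathbb{Z}^d$ ($\tau>0$) with only finitely many discontinuities in $[0,t]$ for every $t<\tau$; $T(t)$ is the site toppled at time $t$. Its odometer at time $t$ is $u_t(x)=\mathcal{L}(T^{-1}(x)\cap[0,t])$ and the mass at time $t$ is $\nu_t=\nu_0+\Delta u_t$. $T$ is legal for $\nu_0$ if $\nu_t(T(t))\ge1$ for all $0\le t\le\tau$, and complete if moreover $\nu_\tau\le1$ everywhere. *)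

From Stdlib Require Import Reals Lra ZArith List ClassicalEpsilon.
Open Scope R_scope.

(* Points of Z^d are represented as functions nat -> Z whose coordinates
   of index >= d vanish. *)
Definition site := nat -> Z.
Definition in_Zd (d : nat) (x : site) : Prop := forall j, (d <= j)%nat -> x j = 0%Z.

Definition shift (x : site) (i : nat) (k : Z) : site :=
  fun j => if Nat.eq_dec j i then (x j + k)%Z else x j.

Fixpoint sumR (n : nat) (g : nat -> R) : R :=
  match n with O => 0 | S m => sumR m g + g m end.

Definition laplacian (d : nat) (f : site -> R) (x : site) : R :=
  / (2 * INR d) * sumR d (fun i => f (shift x i 1%Z) + f (shift x i (-1)%Z)) - f x.

Definition is_discontinuity (tau : R) (T : R -> site) (s : R) : Prop :=
  0 <= s <= tau /\
  forall delta, delta > 0 ->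
    exists s', 0 <= s' <= tau /\ Rabs (s' - s) < delta /\ T s' <> T s.

Definition toppling_function (d : nat) (tau : R) (T : R -> site) : Prop :=
  0 < tau /\
  (forall s, 0 <= s <= tau -> in_Zd d (T s)) /\
  (forall t, 0 <= t < tau ->
     exists l : list R, forall s, 0 <= s <= t -> is_discontinuity tau T s -> In s l).

Definition indic (T : R -> site) (x : site) (s : R) : R :=
  if excluded_middle_informative (T s = x) then 1 else 0.

(* Riemann integral of f over [a,b] (0 if f is not Riemann integrable). *)
Definition RInt_default (f : R -> R) (a b : R) : R :=
  match excluded_middle_informative (exists _ : Riemann_integrable f a b, True) with
  | left H => RiemannInt (proj1_sig (constructive_indefinite_description _ H))
  | right _ => 0
  end.

(* Odometer u_t(x) = L(T^{-1}(x) ∩ [0,t]), as the integral of the indicator. *)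
Definition odometer (T : R -> site) (t : R) (x : site) : R :=
  RInt_default (indic T x) 0 t.

Definition mass (d : nat) (nu0 : site -> R) (T : R -> site) (t : R) (y : site) : R :=
  nu0 y + laplacian d (odometer T t) y.

Definition legal (d : nat) (nu0 : site -> R) (tau : R) (T : R -> site) : Prop :=
  forall t, 0 <= t <= tau -> mass d nu0 T t (T t) >= 1.

Definition complete (d : nat) (nu0 : site -> R) (tau : R) (T : R -> site) : Prop :=
  legal d nu0 tau T /\ forall y, in_Zd d y -> mass d nu0 T tau y <= 1.

(* The heart of the proof is a least action principle: if T1 is legal and T2
   complete then u1_t <= u2_tau2 on Z^d for every t <= tau1.  It is proved by
   real induction on t.  The set of good times is closed because odometers are
   nondecreasing and 1-Lipschitz in t; it extends to the right because T1 is
   constant, equal to some x, just after any time m < tau1: if u1_m(x) had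
   already reached u2_tau2(x), then toppling x a little more would make the
   Laplacian of u1 at x strictly smaller than that of u2_tau2, so the mass of
   T1 at x would drop below the final mass of T2 at x, which is <= 1,
   contradicting legality.  Applying it in both directions gives equal odometers.
   Equal durations follow by summing odometers over a finite set of sites
   covering the range of T2 on [0,t]: this sum is t for T2 and at most tau1
   for T1. *)

From Pilot Require Import Defs.
From Stdlib Require Import Reals ZArith List Lra Lia Classical ClassicalEpsilon.
From Stdlib Require Import RList.
Open Scope R_scope.

Lemma real_induction (P : R -> Prop) (a b : R) : a <= b ->
  (forall m, a <= m <= b -> (forall r, a <= r < m -> P r) -> P m) ->
  (forall m, a <= m < b -> P m ->
     exists delta, delta > 0 /\ forall r, m < r < m + delta -> r <= b -> P r) ->
  forall r, a <= r <= b -> P r.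
Proof.
  intros hab hclosed hstep.
  set (E := fun t => a <= t <= b /\ forall r, a <= r <= t -> P r).
  assert (hEa : E a).
  { split; [lra|]. intros r hr. replace r with a by lra.
    apply hclosed; [lra|]. intros q hq; lra. }
  assert (hbnd : bound E) by (exists b; intros t [ht _]; lra).
  destruct (completeness E hbnd (ex_intro _ a hEa)) as [m [hub hlub]].
  assert (ham : a <= m) by (apply hub; exact hEa).
  assert (hmb : m <= b) by (apply hlub; intros t [ht _]; lra).
  (* a point below the supremum lies below some element of E *)
  assert (hbelow : forall r, a <= r < m -> P r).
  { intros r hr. apply NNPP; intro hnP. assert (m <= r); [|lra].
    apply hlub. intros t [ht hPt]. apply Rnot_lt_le. intro hrt. apply hnP, hPt. lra. }
  assert (hEm : E m).
  { split; [lra|]. intros r hr. destruct (Rlt_le_dec r m); [apply hbelow; lra|].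
    replace r with m by lra. apply hclosed; [lra|exact hbelow]. }
  destruct (Rlt_le_dec m b) as [hlt|hge].
  - exfalso.
    destruct (hstep m (conj ham hlt) (proj2 hEm m (conj ham (Rle_refl m))))
      as [delta [hdelta hext]].
    set (t := Rmin (m + delta / 2) b).
    assert (htm : m < t) by (apply Rmin_glb_lt; lra).
    assert (ht1 : t <= m + delta / 2) by apply Rmin_l.
    assert (ht2 : t <= b) by apply Rmin_r.
    assert (hEt : E t).
    { split; [lra|]. intros r hr. destruct (Rle_dec r m).
      - apply (proj2 hEm); lra.
      - apply hext; lra. }
    pose proof (hub t hEt). lra.
  - intros r hr. apply (proj2 hEm). lra.
Qed.

Lemma left_closed_of_lipschitz (f : R -> R) a m c : a < m ->
  (forall r, a <= r < m -> f r <= c) ->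
  (forall r, a <= r <= m -> f m <= f r + (m - r)) -> f m <= c.
Proof.
  intros ham hbelow hlip. apply Rnot_lt_le; intro hlt.
  set (r := Rmax a (m - (f m - c) / 2)).
  assert (hr : a <= r < m) by (split; [apply Rmax_l | apply Rmax_lub_lt; lra]).
  assert (m - (f m - c) / 2 <= r) by apply Rmax_r.
  pose proof (hbelow r hr). pose proof (hlip r ltac:(lra)). lra.
Qed.

Lemma RInt_default_eq (f : R -> R) a b (pr : Riemann_integrable f a b) :
  RInt_default f a b = RiemannInt pr.
Proof.
  unfold RInt_default. destruct excluded_middle_informative as [h|h].
  - apply RiemannInt_P5.
  - exfalso; apply h; exists pr; exact I.
Qed.

Lemma IsStepFun_ext (f g : R -> R) a b : a <= b ->
  (forall x, a < x < b -> f x = g x) -> IsStepFun f a b -> IsStepFun g a b.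
Proof.
  intros hab hfg [l [lf [hord [h0 [hlast [hlen hconst]]]]]].
  exists l, lf. repeat split; auto.
  intros i hi x hx. rewrite <- (hconst i hi x hx). symmetry. apply hfg.
  rewrite Rmin_left in h0 by lra. rewrite Rmax_right in hlast by lra.
  pose proof (proj1 (RList_P6 l) hord 0%nat i ltac:(lia) ltac:(lia)).
  pose proof (proj1 (RList_P6 l) hord (S i) (pred (length l)) ltac:(lia) ltac:(lia)).
  unfold open_interval in hx. lra.
Qed.

Lemma stepfun_integrable (f : R -> R) a b :
  a <= b -> IsStepFun f a b -> Riemann_integrable f a b.
Proof.
  intros hab hf eps. exists (mkStepFun hf), (mkStepFun (StepFun_P4 a b 0)). split.
  - intros t _. simpl. unfold fct_cte. rewrite Rminus_diag, Rabs_R0. lra.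
  - simpl. rewrite StepFun_P18, Rmult_0_l, Rabs_R0. apply cond_pos.
Qed.

(* A [0,1]-valued function that is a step function on every [a,t] with
   t < b is Riemann integrable on [a,b]: the remaining piece (t,b] only
   contributes b - t to the error. *)
Lemma integrable_of_stepfun_upto (f : R -> R) a b :
  a < b -> (forall s, 0 <= f s <= 1) ->
  (forall t, a <= t < b -> IsStepFun f a t) -> Riemann_integrable f a b.
Proof.
  intros hab hf hstep eps.
  set (t := Rmax a (b - eps / 2)).
  pose proof (cond_pos eps) as heps.
  assert (ht : a <= t < b) by (split; [apply Rmax_l | apply Rmax_lub_lt; lra]).
  assert (htb : b - t <= eps / 2) by (pose proof (Rmax_r a (b - eps / 2)); unfold t; lra).
  set (phi := fun s => if Rle_dec s t then f s else 0).
  set (psi := fun s => if Rle_dec s t then 0 else 1).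
  assert (hphi1 : IsStepFun phi a t).
  { apply (IsStepFun_ext f); [lra| |apply hstep; lra].
    intros s hs. unfold phi. destruct Rle_dec; [reflexivity|lra]. }
  assert (hphi2 : IsStepFun phi t b).
  { apply (IsStepFun_ext (fct_cte 0)); [lra| |apply StepFun_P4].
    intros s hs. unfold phi, fct_cte. destruct Rle_dec; [lra|reflexivity]. }
  assert (hpsi1 : IsStepFun psi a t).
  { apply (IsStepFun_ext (fct_cte 0)); [lra| |apply StepFun_P4].
    intros s hs. unfold psi, fct_cte. destruct Rle_dec; [reflexivity|lra]. }
  assert (hpsi2 : IsStepFun psi t b).
  { apply (IsStepFun_ext (fct_cte 1)); [lra| |apply StepFun_P4].
    intros s hs. unfold psi, fct_cte. destruct Rle_dec; [lra|reflexivity]. }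
  set (hpsi := StepFun_P46 hpsi1 hpsi2).
  exists (mkStepFun (StepFun_P46 hphi1 hphi2)), (mkStepFun hpsi). split.
  - intros s _. simpl. unfold phi, psi. pose proof (hf s). destruct Rle_dec.
    + rewrite Rminus_diag, Rabs_R0. lra.
    + rewrite Rminus_0_r, Rabs_right; lra.
  -
    assert (hpos : 0 <= RiemannInt_SF (mkStepFun hpsi)).
    { rewrite <- (Rmult_0_l (b - a)), <- (StepFun_P18 a b 0).
      apply StepFun_P37; [lra|]. intros s _. simpl. unfold psi, fct_cte.
      destruct Rle_dec; lra. }
    assert (hle1 : RiemannInt_SF (mkStepFun hpsi1) <= 0 * (t - a)).
    { rewrite <- StepFun_P18. apply StepFun_P37; [lra|]. intros s hs. simpl.
      unfold psi, fct_cte. destruct Rle_dec; lra. }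
    assert (hle2 : RiemannInt_SF (mkStepFun hpsi2) <= 1 * (b - t)).
    { rewrite <- StepFun_P18. apply StepFun_P37; [lra|]. intros s hs. simpl.
      unfold psi, fct_cte. destruct Rle_dec; lra. }
    rewrite <- (StepFun_P43 hpsi1 hpsi2 hpsi) in hpos |- *.
    rewrite Rabs_right; lra.
Qed.

Definition constant_on {A : Type} (f : R -> A) (a b : R) : Prop :=
  forall s s', a < s < b -> a < s' < b -> f s = f s'.

Lemma finite_gap (l : list R) m c : m < c ->
  exists b, m < b <= c /\ forall r, In r l -> ~ (m < r < b).
Proof.
  intros hmc. induction l as [|r l [b [hb hgap]]].
  - exists c. split; [lra|]. intros r [].
  - destruct (Rle_dec r m).
    + exists b. split; [exact hb|]. intros q [<-|hq]; [lra|auto].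
    + exists (Rmin b r). pose proof (Rmin_l b r). pose proof (Rmin_r b r).
      split; [split; [apply Rmin_glb_lt|]; lra|].
      intros q [<-|hq] hmq; [lra|]. apply (hgap q hq). lra.
Qed.

Section PiecewiseConstant.
Variables (tau : R) (T : R -> site).

Lemma locally_constant m : 0 <= m <= tau -> ~ is_discontinuity tau T m ->
  exists delta, delta > 0 /\
    forall q, 0 <= q <= tau -> Rabs (q - m) < delta -> T q = T m.
Proof.
  intros hm hnd. apply NNPP; intro hnot. apply hnd. split; [exact hm|].
  intros delta hdelta. apply NNPP; intro hno. apply hnot. exists delta.
  split; [exact hdelta|]. intros q hq hqm. apply NNPP; intro hne. apply hno.
  exists q. auto.
Qed.

(* On an interval free of discontinuities T is constant (connectedness of
   intervals, via real induction). *)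
Lemma constant_between a b : 0 <= a -> b <= tau ->
  (forall r, a < r < b -> ~ is_discontinuity tau T r) -> constant_on T a b.
Proof.
  intros ha hb hnd.
  assert (hright : forall s s', a < s -> s <= s' -> s' < b -> T s' = T s).
  { intros s s' h1 h2 h3.
    apply (real_induction (fun r => T r = T s) s s'); [lra| | |lra].
    - intros m hm hbelow. destruct (Req_dec m s) as [->|hne]; [reflexivity|].
      destruct (locally_constant m ltac:(lra) (hnd m ltac:(lra))) as [delta [hdelta hnb]].
      set (q := Rmax s (m - delta / 2)).
      assert (hq : s <= q < m) by (split; [apply Rmax_l | apply Rmax_lub_lt; lra]).
      assert (hq' : m - delta / 2 <= q) by apply Rmax_r.
      rewrite <- (hnb q ltac:(lra)) by (apply Rabs_def1; lra). apply hbelow; lra.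
    - intros m hm hTm.
      destruct (locally_constant m ltac:(lra) (hnd m ltac:(lra))) as [delta [hdelta hnb]].
      exists delta. split; [exact hdelta|]. intros r hr hrs.
      rewrite <- hTm. apply hnb; [lra|]. apply Rabs_def1; lra. }
  intros s s' hs hs'. destruct (Rle_dec s s').
  - symmetry; apply hright; lra.
  - apply hright; lra.
Qed.

Lemma piecewise_ind (P : R -> R -> Type) :
  (forall a b, 0 <= a <= b -> b <= tau -> constant_on T a b -> P a b) ->
  (forall a s b, P a s -> P s b -> P a b) ->
  forall l a b, 0 <= a <= b -> b <= tau ->
    (forall r, a < r < b -> is_discontinuity tau T r -> In r l) -> P a b.
Proof.
  intros hbase hglue l. induction l as [|s l IH]; intros a b hab hb hl.
  - apply hbase; [lra|lra|]. apply constant_between; [lra|lra|].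
    intros r hr hd. exact (hl r hr hd).
  - assert (hl' : forall a' b', a <= a' -> b' <= b -> (a' < s < b' -> False) ->
              forall r, a' < r < b' -> is_discontinuity tau T r -> In r l).
    { intros a' b' h1 h2 hs r hr hd. destruct (hl r ltac:(lra) hd) as [<-|hin];
        [exfalso; apply hs; lra | exact hin]. }
    destruct (Rlt_dec a s) as [h1|h1]; [destruct (Rlt_dec s b) as [h2|h2]|].
    + apply (hglue a s b); apply IH; try lra; apply hl'; lra.
    + apply IH; try lra. apply hl'; lra.
    + apply IH; try lra. apply hl'; lra.
Qed.

End PiecewiseConstant.

Lemma constant_right_of d tau (T : R -> site) m :
  toppling_function d tau T -> 0 <= m < tau ->
  exists b, m < b < tau /\ constant_on T m b.
Proof.
  intros [_ [_ hfin]] hm.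
  destruct (hfin ((m + tau) / 2) ltac:(lra)) as [l hl].
  destruct (finite_gap l m ((m + tau) / 2) ltac:(lra)) as [b [hb hgap]].
  exists b. split; [lra|]. apply (constant_between tau T); [lra|lra|].
  intros r hr hd. apply (hgap r); [apply hl; [lra|exact hd] | lra].
Qed.

Section Odometer.
Variables (d : nat) (tau : R) (T : R -> site).
Hypothesis hT : toppling_function d tau T.

Lemma indic_bounds x s : 0 <= indic T x s <= 1.
Proof. unfold indic; destruct excluded_middle_informative; lra. Qed.

(* Before tau there are finitely many discontinuities, so the indicator of
   the time spent at x is a step function. *)
Lemma indic_stepfun x t : 0 <= t < tau -> IsStepFun (indic T x) 0 t.
Proof.
  intros ht.
  destruct (constructive_indefinite_description _ (proj2 (proj2 hT) t ht)) as [l hl].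
  apply (piecewise_ind tau T (fun a b => IsStepFun (indic T x) a b)) with (l := l);
    [| intros a s b; apply StepFun_P46 | lra | lra | intros r hr hd; apply hl; [lra|exact hd]].
  intros a b hab _ hconst.
  apply (IsStepFun_ext (fct_cte (indic T x ((a + b) / 2)))); [lra| |apply StepFun_P4].
  intros s hs. unfold fct_cte, indic. rewrite (hconst s ((a + b) / 2)) by lra. reflexivity.
Qed.

Lemma indic_integrable x t : 0 <= t <= tau -> Riemann_integrable (indic T x) 0 t.
Proof.
  intros ht. destruct (Rlt_le_dec t tau) as [hlt|hge].
  - apply stepfun_integrable; [lra|]. apply indic_stepfun; lra.
  - replace t with tau by lra. apply integrable_of_stepfun_upto.
    + exact (proj1 hT).
    + apply indic_bounds.
    + apply indic_stepfun.
Qed.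

Lemma odometer_eq x t (ht : 0 <= t <= tau) :
  odometer T t x = RiemannInt (indic_integrable x t ht).
Proof. apply RInt_default_eq. Qed.

Lemma odometer_zero x : odometer T 0 x = 0.
Proof.
  unfold odometer. rewrite (RInt_default_eq _ _ _ (RiemannInt_P7 (indic T x) 0)).
  apply RiemannInt_P9.
Qed.

Lemma odometer_chasles x r s : 0 <= r -> r <= s -> s <= tau ->
  exists pr : Riemann_integrable (indic T x) r s,
    odometer T s x = odometer T r x + RiemannInt pr.
Proof.
  intros h1 h2 h3.
  set (prs := indic_integrable x s ltac:(lra)).
  exists (RiemannInt_P23 prs (conj h1 h2)).
  rewrite (odometer_eq x s ltac:(lra)), (odometer_eq x r ltac:(lra)).
  symmetry. apply RiemannInt_P25; assumption.
Qed.

Lemma odometer_lipschitz x r s : 0 <= r -> r <= s -> s <= tau ->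
  odometer T r x <= odometer T s x <= odometer T r x + (s - r).
Proof.
  intros h1 h2 h3. destruct (odometer_chasles x r s h1 h2 h3) as [pr ->].
  pose proof (RiemannInt_const_bound pr h2 (fun y _ => indic_bounds x y)). lra.
Qed.

Lemma odometer_nonneg x t : 0 <= t <= tau -> 0 <= odometer T t x.
Proof.
  intros ht. rewrite <- (odometer_zero x).
  apply (odometer_lipschitz x 0 t); lra.
Qed.

Lemma odometer_on_piece x m s : 0 <= m -> m <= s -> s <= tau ->
  (forall q, m < q < s -> T q = x) ->
  odometer T s x = odometer T m x + (s - m) /\
  forall y, y <> x -> odometer T s y = odometer T m y.
Proof.
  intros h1 h2 h3 hq. split.
  - destruct (odometer_chasles x m s h1 h2 h3) as [pr ->].
    rewrite (RiemannInt_P18 pr (RiemannInt_P14 m s 1) h2), RiemannInt_P15; [ring|].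
    intros q hq'. unfold indic, fct_cte. rewrite hq by lra.
    destruct excluded_middle_informative; congruence.
  - intros y hy. destruct (odometer_chasles y m s h1 h2 h3) as [pr ->].
    rewrite (RiemannInt_P18 pr (RiemannInt_P14 m s 0) h2), RiemannInt_P15; [ring|].
    intros q hq'. unfold indic, fct_cte. rewrite hq by lra.
    destruct excluded_middle_informative; congruence.
Qed.

End Odometer.

Definition sum_sites (L : list site) (g : site -> R) : R :=
  fold_right (fun x acc => g x + acc) 0 L.

Lemma sum_sites_le (L : list site) (f g : site -> R) :
  (forall x, In x L -> f x <= g x) -> sum_sites L f <= sum_sites L g.
Proof.
  induction L as [|x L IH]; intros h; simpl; [lra|].
  pose proof (h x (or_introl eq_refl)).
  assert (sum_sites L f <= sum_sites L g) by (apply IH; intros y hy; apply h; right; exact hy).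
  lra.
Qed.

Lemma sum_indic (T : R -> site) s L : NoDup L ->
  sum_sites L (fun x => indic T x s) =
    if excluded_middle_informative (In (T s) L) then 1 else 0.
Proof.
  induction L as [|x L IH]; intros hnd; simpl.
  - destruct excluded_middle_informative as [[]|]; reflexivity.
  - apply NoDup_cons_iff in hnd as [hx hnd]. rewrite (IH hnd). unfold indic.
    destruct (excluded_middle_informative (T s = x)) as [->|hne].
    + destruct (excluded_middle_informative (In x L)); [contradiction|].
      destruct (excluded_middle_informative (x = x \/ In x L)); [ring|tauto].
    + destruct (excluded_middle_informative (In (T s) L));
        destruct (excluded_middle_informative (x = T s \/ In (T s) L));
        first [ring | exfalso; intuition].
Qed.

Definition site_eq_dec (x y : site) : {x = y} + {x <> y} :=
  excluded_middle_informative (x = y).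

Section TotalTime.
Variables (d : nat) (tau : R) (T : R -> site).
Hypothesis hT : toppling_function d tau T.

Lemma sum_odometers_integral L t (ht : 0 <= t <= tau) :
  exists pr : Riemann_integrable (fun s => sum_sites L (fun x => indic T x s)) 0 t,
    RiemannInt pr = sum_sites L (fun x => odometer T t x).
Proof.
  induction L as [|x L [prL hL]].
  - exists (RiemannInt_P14 0 t 0).
    apply (eq_trans (RiemannInt_P15 (RiemannInt_P14 0 t 0))). simpl. ring.
  - set (prx := indic_integrable d tau T hT x t ht).
    set (pr := RiemannInt_P10 1 prx prL).
    assert (pe : Riemann_integrable
                   (fun s => sum_sites (x :: L) (fun y => indic T y s)) 0 t).
    { refine (Riemann_integrable_ext _ _ pr). intros s _. simpl. ring. }
    exists pe.
    rewrite (RiemannInt_P18 pe pr); [| lra | intros; simpl; ring].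
    rewrite (RiemannInt_P13 prx prL pr), hL. simpl.
    rewrite (odometer_eq d tau T hT x t ht). unfold prx. ring.
Qed.

Lemma sum_odometers_le L t : NoDup L -> 0 <= t <= tau ->
  sum_sites L (fun x => odometer T t x) <= t.
Proof.
  intros hnd ht. destruct (sum_odometers_integral L t ht) as [pr <-].
  assert (hb : forall s, 0 < s < t -> 0 <= sum_sites L (fun x => indic T x s) <= 1).
  { intros s _. rewrite (sum_indic T s L hnd). destruct excluded_middle_informative; lra. }
  pose proof (RiemannInt_const_bound pr (proj1 ht) hb). lra.
Qed.

Lemma sum_odometers_ge_of_cover L t : NoDup L -> 0 <= t <= tau ->
  (forall s, 0 <= s <= t -> In (T s) L) -> t <= sum_sites L (fun x => odometer T t x).
Proof.
  intros hnd ht hcov. destruct (sum_odometers_integral L t ht) as [pr <-].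
  assert (hb : forall s, 0 < s < t -> 1 <= sum_sites L (fun x => indic T x s) <= 1).
  { intros s hs. rewrite (sum_indic T s L hnd).
    destruct excluded_middle_informative as [_|hnot]; [lra|].
    exfalso. apply hnot, hcov. lra. }
  pose proof (RiemannInt_const_bound pr (proj1 ht) hb). lra.
Qed.

Lemma finite_range t : 0 <= t < tau ->
  exists L, (forall s, 0 <= s <= t -> In (T s) L) /\ (forall y, In y L -> in_Zd d y).
Proof.
  intros ht. destruct hT as [_ [hZd hfin]]. destruct (hfin t ht) as [l hl].
  apply (piecewise_ind tau T
    (fun a b => exists L, (forall s, a <= s <= b -> In (T s) L) /\
                          (forall y, In y L -> in_Zd d y)))
    with (l := l); [| | lra | lra | intros r hr hd; apply hl; [lra|exact hd]].
  - intros a b hab hb hconst. exists (T a :: T ((a + b) / 2) :: T b :: nil). split.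
    + intros s hs. destruct (Req_dec s a) as [->|]; [left; reflexivity|].
      destruct (Req_dec s b) as [->|]; [right; right; left; reflexivity|].
      right; left. apply hconst; lra.
    + intros y [<-|[<-|[<-|[]]]]; apply hZd; lra.
  - intros a s b [L1 [hcov1 hZd1]] [L2 [hcov2 hZd2]]. exists (L1 ++ L2). split.
    + intros q hq. apply in_or_app.
      destruct (Rle_dec q s); [left; apply hcov1 | right; apply hcov2]; lra.
    + intros y hy. apply in_app_or in hy as [hy|hy]; auto.
Qed.

End TotalTime.

Lemma time_le_of_odometers_le d tau1 tau2 (T1 T2 : R -> site) :
  toppling_function d tau1 T1 -> toppling_function d tau2 T2 ->
  (forall x, in_Zd d x -> odometer T2 tau2 x <= odometer T1 tau1 x) -> tau2 <= tau1.
Proof.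
  intros hT1 hT2 hle. apply Rnot_lt_le. intro hlt.
  assert (htau1 : 0 < tau1) by exact (proj1 hT1).
  set (t := (tau1 + tau2) / 2).
  destruct (finite_range d tau2 T2 hT2 t ltac:(unfold t; lra)) as [L0 [hcov hZd]].
  set (L := nodup site_eq_dec L0).
  assert (hnd : NoDup L) by apply NoDup_nodup.
  assert (hchain : sum_sites L (fun x => odometer T2 t x) <=
                   sum_sites L (fun x => odometer T1 tau1 x)).
  { apply sum_sites_le. intros x hx. apply nodup_In in hx.
    pose proof (odometer_lipschitz d tau2 T2 hT2 x t tau2 ltac:(unfold t; lra)
                  ltac:(unfold t; lra) ltac:(lra)).
    pose proof (hle x (hZd x hx)). lra. }
  pose proof (sum_odometers_ge_of_cover d tau2 T2 hT2 L t hnd ltac:(unfold t; lra)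
                (fun s hs => proj2 (nodup_In _ _ _) (hcov s hs))).
  pose proof (sum_odometers_le d tau1 T1 hT1 L tau1 hnd ltac:(lra)).
  unfold t in *. lra.
Qed.

Lemma shift_neq x i k : k <> 0%Z -> Defs.shift x i k <> x.
Proof.
  intros hk e. assert (h := f_equal (fun f => f i) e). unfold Defs.shift in h.
  destruct (Nat.eq_dec i i); [lia | congruence].
Qed.

Lemma shift_in_Zd d x i k : in_Zd d x -> (i < d)%nat -> in_Zd d (Defs.shift x i k).
Proof.
  intros hx hi j hj. unfold Defs.shift. destruct (Nat.eq_dec j i); [lia | auto].
Qed.

Lemma sumR_le n (f g : nat -> R) :
  (forall i, (i < n)%nat -> f i <= g i) -> sumR n f <= sumR n g.
Proof.
  induction n as [|n IH]; intros h; simpl; [lra|].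
  pose proof (h n ltac:(lia)).
  assert (sumR n f <= sumR n g) by (apply IH; intros i hi; apply h; lia). lra.
Qed.

Lemma sumR_ext n (f g : nat -> R) :
  (forall i, (i < n)%nat -> f i = g i) -> sumR n f = sumR n g.
Proof.
  induction n as [|n IH]; intros h; simpl; [reflexivity|].
  rewrite (h n ltac:(lia)), IH; [reflexivity|]. intros i hi; apply h; lia.
Qed.

Lemma laplacian_ext d (f g : site -> R) x : in_Zd d x ->
  (forall y, in_Zd d y -> f y = g y) -> laplacian d f x = laplacian d g x.
Proof.
  intros hx hfg. unfold laplacian. rewrite (hfg x hx).
  rewrite (sumR_ext d _ (fun i => g (Defs.shift x i 1) + g (Defs.shift x i (-1)))); [reflexivity|].
  intros i hi. rewrite !hfg by (apply shift_in_Zd; assumption). reflexivity.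
Qed.

Lemma laplacian_lt d (f g : site -> R) x : (1 <= d)%nat -> in_Zd d x ->
  (forall y, in_Zd d y -> y <> x -> f y <= g y) -> g x < f x ->
  laplacian d f x < laplacian d g x.
Proof.
  intros hd hx hnb hgt. unfold laplacian.
  assert (hsum : sumR d (fun i => f (Defs.shift x i 1) + f (Defs.shift x i (-1))) <=
                 sumR d (fun i => g (Defs.shift x i 1) + g (Defs.shift x i (-1)))).
  { apply sumR_le. intros i hi.
    pose proof (hnb _ (shift_in_Zd d x i 1 hx hi) (shift_neq x i 1 ltac:(lia))).
    pose proof (hnb _ (shift_in_Zd d x i (-1) hx hi) (shift_neq x i (-1) ltac:(lia))).
    lra. }
  assert (hpos : 0 < / (2 * INR d)).
  { apply Rinv_0_lt_compat. assert (0 < INR d) by (apply lt_0_INR; lia). lra. }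
  pose proof (Rmult_le_compat_l _ _ _ (Rlt_le _ _ hpos) hsum). lra.
Qed.

Section LeastAction.
Variables (d : nat) (nu0 : site -> R) (tau1 tau2 : R) (T1 T2 : R -> site).
Hypotheses (hd : (1 <= d)%nat)
  (hT1 : toppling_function d tau1 T1) (hT2 : toppling_function d tau2 T2)
  (hl1 : legal d nu0 tau1 T1) (hc2 : complete d nu0 tau2 T2).

Let dominated (t : R) : Prop :=
  forall x, in_Zd d x -> odometer T1 t x <= odometer T2 tau2 x.

Lemma dominated_closed m : 0 <= m <= tau1 ->
  (forall r, 0 <= r < m -> dominated r) -> dominated m.
Proof.
  intros hm hbelow x hx. destruct (Req_dec m 0) as [->|hne].
  - rewrite (odometer_zero T1). apply (odometer_nonneg d tau2 T2 hT2).
    pose proof (proj1 hT2). lra.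
  - apply (left_closed_of_lipschitz (fun t => odometer T1 t x) 0 m); [lra| |].
    + intros r hr. apply hbelow; assumption.
    + intros r hr. apply (odometer_lipschitz d tau1 T1 hT1); lra.
Qed.

(* If T1 topples x on (m,s] from a good time m, then u1_m(x) has not yet
   reached u2_tau2(x): otherwise the mass of T1 at x at time s would be
   strictly below the final mass of T2 at x, which is at most 1. *)
Lemma no_toppling_beyond m s x : 0 <= m < s -> s <= tau1 -> in_Zd d x ->
  dominated m -> (forall q, m < q <= s -> T1 q = x) ->
  odometer T1 m x < odometer T2 tau2 x.
Proof.
  intros hms hs hx hdom hq. apply Rnot_le_lt. intro hge.
  destruct (odometer_on_piece d tau1 T1 hT1 x m s ltac:(lra) ltac:(lra) hs
              (fun q hq' => hq q ltac:(lra))) as [hat hoff].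
  pose proof (hl1 s ltac:(lra)) as hlegal. rewrite (hq s ltac:(lra)) in hlegal.
  pose proof (proj2 hc2 x hx) as hcomplete.
  assert (hlap : laplacian d (odometer T1 s) x < laplacian d (odometer T2 tau2) x).
  { apply laplacian_lt; [exact hd | exact hx | |lra].
    intros y hy hyx. rewrite (hoff y hyx). apply hdom, hy. }
  unfold mass in hlegal, hcomplete. lra.
Qed.

Lemma dominated_step m : 0 <= m < tau1 -> dominated m ->
  exists delta, delta > 0 /\ forall r, m < r < m + delta -> r <= tau1 -> dominated r.
Proof.
  intros hm hdom.
  destruct (constant_right_of d tau1 T1 m hT1 hm) as [b [hb hconst]].
  set (x := T1 ((m + b) / 2)).
  assert (hq : forall q, m < q < b -> T1 q = x) by (intros q hq; apply hconst; lra).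
  assert (hx : in_Zd d x) by (apply (proj1 (proj2 hT1)); lra).
  pose proof (no_toppling_beyond m ((m + b) / 2) x ltac:(lra) ltac:(lra) hx hdom
                (fun q hq' => hq q ltac:(lra))) as hroom.
  set (delta := Rmin (b - m) (odometer T2 tau2 x - odometer T1 m x)).
  assert (hdelta : delta > 0) by (apply Rmin_glb_lt; lra).
  exists delta. split; [exact hdelta|]. intros r hr hr1 y hy.
  pose proof (Rmin_l (b - m) (odometer T2 tau2 x - odometer T1 m x)).
  pose proof (Rmin_r (b - m) (odometer T2 tau2 x - odometer T1 m x)).
  destruct (odometer_on_piece d tau1 T1 hT1 x m r ltac:(lra) ltac:(lra) hr1
              (fun q hq' => hq q ltac:(unfold delta in *; lra))) as [hat hoff].
  destruct (site_eq_dec y x) as [->|hyx].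
  - unfold delta in *. lra.
  - rewrite (hoff y hyx). apply hdom, hy.
Qed.

Theorem least_action t : 0 <= t <= tau1 -> dominated t.
Proof.
  apply real_induction; [exact (Rlt_le _ _ (proj1 hT1)) | exact dominated_closed | exact dominated_step].
Qed.

End LeastAction.

Theorem mainTheorem13 (d : nat) (hd : (1 <= d)%nat) (nu0 : site -> R)
  (tau1 tau2 : R) (T1 T2 : R -> site)
  (hT1 : toppling_function d tau1 T1) (hT2 : toppling_function d tau2 T2)
  (hc1 : complete d nu0 tau1 T1) (hc2 : complete d nu0 tau2 T2) :
  (forall x, in_Zd d x -> odometer T1 tau1 x = odometer T2 tau2 x) /\
  tau1 = tau2 /\
  (forall y, in_Zd d y -> mass d nu0 T1 tau1 y = mass d nu0 T2 tau2 y).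
Proof.
  assert (htau1 : 0 <= tau1 <= tau1) by (pose proof (proj1 hT1); lra).
  assert (htau2 : 0 <= tau2 <= tau2) by (pose proof (proj1 hT2); lra).
  assert (hodo : forall x, in_Zd d x -> odometer T1 tau1 x = odometer T2 tau2 x).
  { intros x hx. apply Rle_antisym.
    - exact (least_action d nu0 tau1 tau2 T1 T2 hd hT1 hT2 (proj1 hc1) hc2 tau1 htau1 x hx).
    - exact (least_action d nu0 tau2 tau1 T2 T1 hd hT2 hT1 (proj1 hc2) hc1 tau2 htau2 x hx). }
  split; [exact hodo|]. split.
  - apply Rle_antisym.
    + apply (time_le_of_odometers_le d tau2 tau1 T2 T1 hT2 hT1).
      intros x hx. rewrite hodo by exact hx. apply Rle_refl.
    + apply (time_le_of_odometers_le d tau1 tau2 T1 T2 hT1 hT2).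
      intros x hx. rewrite hodo by exact hx. apply Rle_refl.
  - intros y hy. unfold mass.
    rewrite (laplacian_ext d (odometer T1 tau1) (odometer T2 tau2) y hy hodo). reflexivity.
Qed.
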